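(* Let $(p_t)_{t\ge0}$ be the laws of the Ornstein--Uhlenbeck process $dX_t=-X_t\,dt+\sqrt2\,dB_t$ started from a norm-subgaussian random vector $X_0=X\sim p$ in $\mathbb{R}^d$. Fix $0<\delta<1$ and take $T_1\ge\log\big(\frac{16}{\delta}d(\|X\|_{\psi_2}+1)\big)$. Then for all $x\in\mathbb{R}^d$ and $i\in\{1,\dots,d\}$, $$\big|-x_i-\partial_i\log p_{T_1}(x)\big|\le\frac{\delta}{2d}(1+\|x\|).$$
   Context: $\|X\|_{\psi_2}:=\inf\{t>0:\mathbb{E}[e^{\|X\|^2/t^2}]\le2\}$; $X$ is norm-subgaussian if this is finite. $p_{T_1}$ denotes the Lebesgue density of the law of $X_{T_1}$. *)

From HB Require Import structures.
From mathcomp Require Import all_boot all_order all_algebra.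
From mathcomp Require Import all_classical all_reals all_analysis.
Set Implicit Arguments. Unset Strict Implicit. Unset Printing Implicit Defensive.
Import Order.TTheory GRing.Theory Num.Theory.
Import numFieldNormedType.Exports.
Local Open Scope classical_set_scope.
Local Open Scope ring_scope.

Section Defs.
Context {R : realType}.

Definition enorm {n : nat} (x : 'rV[R]_n) : R :=
  Num.sqrt (\sum_(j < n) x ord0 j ^+ 2).

Definition basis_vec {n : nat} (i : 'I_n) : 'rV[R]_n := \row_(j < n) (i == j)%:R.

Context {dT : measure_display} {T : measurableType dT} (P : probability T R).

Definition rvec {n : nat} (X : 'I_n -> {RV P >-> R}) (w : T) : 'rV[R]_n :=
  \row_(j < n) X j w.

Definition psi2_set {n : nat} (X : 'I_n -> {RV P >-> R}) : set R :=
  [set t : R | 0 < t /\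
     (\int[P]_w (expR (enorm (rvec X w) ^+ 2 / t ^+ 2))%:E <= 2%:E)%E].

(* X is norm-subgaussian iff the psi_2 norm is finite, i.e. the set is nonempty. *)
Definition norm_subgaussian {n : nat} (X : 'I_n -> {RV P >-> R}) : Prop :=
  psi2_set X !=set0.

Definition psi2_norm {n : nat} (X : 'I_n -> {RV P >-> R}) : R :=
  inf (psi2_set X).

Definition gauss_density {n : nat} (s2 : R) (z : 'rV[R]_n) : R :=
  (2 * pi * s2) `^ (- (n%:R / 2)) * expR (- (enorm z ^+ 2) / (2 * s2)).

(* Lebesgue density p_t of the law of X_t, where X_t solves the OU SDE
   dX_t = -X_t dt + sqrt 2 dB_t with X_0 = X.  Explicitly,
   X_t = e^{-t} X_0 + sqrt(1 - e^{-2t}) Z with Z ~ N(0, I) independent of X_0,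
   so p_t(x) = E[ phi_{1 - e^{-2t}}(x - e^{-t} X_0) ]. *)
Definition OU_density {n : nat} (X : 'I_n -> {RV P >-> R}) (t : R)
    (x : 'rV[R]_n) : R :=
  fine (\int[P]_w
          (gauss_density (1 - expR (- (2 * t))) (x - expR (- t) *: rvec X w))%:E).

End Defs.

From HB Require Import structures.
From mathcomp Require Import all_boot all_order all_algebra.
From mathcomp Require Import all_classical all_reals all_analysis.
From mathcomp Require Import measurable_realfun ring lra.
Set Implicit Arguments. Unset Strict Implicit. Unset Printing Implicit Defensive.
Import Order.TTheory GRing.Theory Num.Theory.
Import numFieldNormedType.Exports.
Local Open Scope classical_set_scope.
Local Open Scope ring_scope.

(* With [e = exp (-t)] and [s2 = 1 - e^2], [p_t(x) = E[phi_s2 (x - e X)]] is a Gaussian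
   mixture, so by Tweedie's formula [-x_i - d_i log p_t(x) = (e^2 x_i - e E_W[X_i]) / s2],
   where [E_W] is the expectation tilted by [W = exp (-|x - e X|^2 / (2 s2))].
   Since [W >= exp (-|x|^2 / s2) exp (-e^2 |X|^2 / s2)] and [E[exp (|X|^2 / k^2)] <= 2] for
   some [k < ||X||_psi2 + 1], the mass [E[W]] is bounded below, and the duality
   [W (1 + y) <= exp y] for [0 <= W <= 1], applied with Young's inequality, bounds [E[W |X_i|]];
   altogether [|E_W[X_i]| <= 43/12 k (1 + |x|)].  The choice of [T_1] makes [e] and [e k] at
   most [delta / (16 d)], which turns this into the bound [delta / (2 d) (1 + |x|)]. *)

Section real_inequalities.
Context {R : realType}.

Lemma expRN1_le_half : expR (-1) <= (2^-1 : R).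
Proof.
rewrite expRN lef_pV2 ?posrE ?expR_gt0//.
by rewrite (le_trans _ (expR_ge1Dx 1)).
Qed.

Lemma mulr_1Dx_le_expR (W y : R) : 0 <= W <= 1 -> W * (1 + y) <= expR y.
Proof.
case/andP=> W0 W1; have := expR_ge1Dx y; have := expR_gt0 y.
case: (lerP 0 (1 + y)) => hy; nra.
Qed.

Lemma young_abs_le (lam k y v : R) : 0 < k -> y ^+ 2 <= v ->
  lam * `|y| <= v / k ^+ 2 + (lam * k) ^+ 2 / 4.
Proof.
move=> k0 yv; pose t := `|y| / k.
have -> : `|y| = t * k by rewrite /t divfK ?gt_eqF.
have tv : t ^+ 2 <= v / k ^+ 2.
  by rewrite /t expr_div_n ler_pM2r ?invr_gt0 ?exprn_gt0// real_normK ?num_real.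
have := sqr_ge0 (t - lam * k / 2); nra.
Qed.

End real_inequalities.

Section probability_integrals.
Context {R : realType} {dT : measure_display} {T : measurableType dT}.
Variable P : probability T R.

Lemma integrable_of_abs_le (f g : T -> R) : measurable_fun setT f ->
  P.-integrable setT (EFin \o g) -> (forall w, `|f w| <= g w) ->
  P.-integrable setT (EFin \o f).
Proof.
move=> mf ig fg; apply: (le_integrable _ _ _ ig) => //.
  exact/measurable_EFinP.
by move=> w _ /=; rewrite !lee_fin (le_trans (fg w)) ?ler_norm.
Qed.

Lemma integrable_cst_prob (k : R) : P.-integrable setT (EFin \o cst k).
Proof. exact: finite_measure_integrable_cst. Qed.

Lemma Rintegral_cst_prob (k : R) : \int[P]_w k = k.
Proof.
rewrite Rintegral_cst// -[RHS]mulr1; congr (_ * _).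
by rewrite -[1]/(fine 1%E); congr fine; exact: probability_setT.
Qed.

Lemma integrableD_fun (f g : T -> R) : P.-integrable setT (EFin \o f) ->
  P.-integrable setT (EFin \o g) -> P.-integrable setT (EFin \o (fun w => f w + g w)).
Proof. exact: integrableD. Qed.

Lemma integrableZl_fun (c : R) (f : T -> R) : P.-integrable setT (EFin \o f) ->
  P.-integrable setT (EFin \o (fun w => c * f w)).
Proof. exact: integrableZl. Qed.

Lemma Rintegral_affine (c b : R) (f : T -> R) : P.-integrable setT (EFin \o f) ->
  \int[P]_w (c + b * f w) = c + b * \int[P]_w f w.
Proof.
move=> hf; rewrite RintegralD//; [|exact: integrable_cst_prob|exact: integrableZl_fun].
by rewrite RintegralZl// Rintegral_cst_prob.
Qed.

Lemma ge0_integral_le_integrable (E : T -> R) (b : R) : measurable_fun setT E ->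
  (forall w, 0 <= E w) -> (\int[P]_w (E w)%:E <= b%:E)%E ->
  P.-integrable setT (EFin \o E) /\ \int[P]_w E w <= b.
Proof.
move=> mE E0 Eb.
have Efin : (\int[P]_w (E w)%:E)%E \is a fin_num.
  rewrite ge0_fin_numE; first by rewrite (le_lt_trans Eb) ?ltry.
  by apply: integral_ge0 => w _; rewrite lee_fin.
split; last by rewrite /Rintegral -lee_fin fineK.
apply/integrableP; split; first exact/measurable_EFinP.
under eq_integral do rewrite /= ger0_norm//.
by rewrite (le_lt_trans Eb) ?ltry.
Qed.

End probability_integrals.

Section tilted_moments.
Context {R : realType} {dT : measure_display} {T : measurableType dT}.
Variable P : probability T R.

Variables (V : T -> R) (k : R).
Hypothesis mV : measurable_fun setT V.
Hypothesis V_ge0 : forall w, 0 <= V w.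
Hypothesis k_gt0 : 0 < k.
Hypothesis expR_V_le2 : (\int[P]_w (expR (V w / k ^+ 2))%:E <= 2%:E)%E.

Let E w := expR (V w / k ^+ 2).

Let mE : measurable_fun setT E.
Proof. by apply: measurableT_comp => //; apply: measurable_funM. Qed.

Let E_integrable : P.-integrable setT (EFin \o E).
Proof. by case: (ge0_integral_le_integrable mE (fun w => expR_ge0 _) expR_V_le2). Qed.

Let E_integral_le2 : \int[P]_w E w <= 2.
Proof. by case: (ge0_integral_le_integrable mE (fun w => expR_ge0 _) expR_V_le2). Qed.

(* [expR u >= 1 + u] at [u = V / k^2]. *)
Let V_le_affine_E w : V w <= - k ^+ 2 + k ^+ 2 * E w.
Proof.
have k2_gt0 : 0 < k ^+ 2 by rewrite exprn_gt0.
have := ler_wpM2l (ltW k2_gt0) (expR_ge1Dx (V w / k ^+ 2)).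
rewrite mulrDr mulr1 mulrCA divff ?gt_eqF // mulr1 /E; lra.
Qed.

Let affine_E_integrable : P.-integrable setT (EFin \o (fun w => - k ^+ 2 + k ^+ 2 * E w)).
Proof. by apply: integrableD_fun; [exact: integrable_cst_prob|exact: integrableZl_fun]. Qed.

Lemma expR_moment_integrable : P.-integrable setT (EFin \o V).
Proof.
apply: (integrable_of_abs_le mV affine_E_integrable) => w.
by rewrite ger0_norm // V_le_affine_E.
Qed.

Lemma expR_moment_integral_le : \int[P]_w V w <= k ^+ 2.
Proof.
apply: le_trans (le_Rintegral measurableT expR_moment_integrable affine_E_integrable
  (fun w _ => V_le_affine_E w)) _.
rewrite Rintegral_affine //.
have := ler_wpM2l (ltW (exprn_gt0 2 k_gt0)) E_integral_le2; lra.
Qed.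

Variables (W : T -> R) (A a : R).
Hypothesis mW : measurable_fun setT W.
Hypothesis W_gt0 : forall w, 0 < W w.
Hypothesis W_le1 : forall w, W w <= 1.
Hypothesis W_ge : forall w, expR (- A) * expR (- (a * V w)) <= W w.
Hypothesis a_ge0 : 0 <= a.
Hypothesis ak_le : a * k ^+ 2 <= 1/2.

Lemma tilted_integrable : P.-integrable setT (EFin \o W).
Proof.
apply: (integrable_of_abs_le mW (integrable_cst_prob P 1)) => w /=.
by rewrite ger0_norm ?W_le1 // ltW.
Qed.

(* From [expR (-u) >= 1 - u] and [E[V] <= k^2]. *)
Lemma tilted_mass_ge : expR (- A) / 2 <= \int[P]_w W w.
Proof.
have eA := expR_gt0 (- A).
have W_ge_affine w : expR (- A) + (- (expR (- A) * a)) * V w <= W w.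
  apply: le_trans (W_ge w).
  have := ler_wpM2l (ltW eA) (expR_ge1Dx (- (a * V w))); lra.
apply: le_trans (le_Rintegral measurableT _ tilted_integrable (fun w _ => W_ge_affine w)).
  rewrite Rintegral_affine; last exact: expR_moment_integrable.
  have h1 := ler_wpM2l (mulr_ge0 (ltW eA) a_ge0) expR_moment_integral_le.
  have h2 := ler_wpM2l (ltW eA) ak_le.
  lra.
apply: integrableD_fun; first exact: integrable_cst_prob.
exact/integrableZl_fun/expR_moment_integrable.
Qed.

Lemma tilted_mass_gt0 : 0 < \int[P]_w W w.
Proof. by apply: lt_le_trans tilted_mass_ge; rewrite divr_gt0 ?expR_gt0. Qed.

Variable Y : T -> R.
Hypothesis mY : measurable_fun setT Y.
Hypothesis Y_sqr_le : forall w, Y w ^+ 2 <= V w.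

Let abs_Y_le w : `|Y w| <= 1 + V w.
Proof.
have := Y_sqr_le w; have := sqr_ge0 (`|Y w| - 1); rewrite -(real_normK (num_real (Y w))).
have := normr_ge0 (Y w); nra.
Qed.

Let one_plus_V_integrable : P.-integrable setT (EFin \o (fun w => 1 + V w)).
Proof. exact: integrableD_fun (integrable_cst_prob P 1) expR_moment_integrable. Qed.

Let W_abs_Y_le w : W w * `|Y w| <= 1 + V w.
Proof. by apply: le_trans (abs_Y_le w); rewrite ler_piMl ?W_le1. Qed.

Let W_abs_Y_integrable : P.-integrable setT (EFin \o (fun w => W w * `|Y w|)).
Proof.
apply: (integrable_of_abs_le _ one_plus_V_integrable) => [|w].
  exact/measurable_funM/measurableT_comp.
by rewrite normrM normr_id ger0_norm ?W_abs_Y_le // ltW.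
Qed.

Lemma tilted_integrable_mul : P.-integrable setT (EFin \o (fun w => W w * Y w)).
Proof.
apply: (integrable_of_abs_le (measurable_funM mW mY) one_plus_V_integrable) => w.
by rewrite normrM ger0_norm ?W_abs_Y_le // ltW.
Qed.

(* Young's inequality [lam |Y| <= V / k^2 + (lam k)^2 / 4] inside the duality [W (1 + y) <= expR y]. *)
Let tilted_pointwise_le (lam : R) w :
  lam * (W w * `|Y w|) + - (A + 1 + (lam * k) ^+ 2 / 4) * W w <= expR (- (A + 1)) / 2 * E w.
Proof.
pose y := lam * `|Y w| - (1 + (lam * k) ^+ 2 / 4) - (A + 1).
have W_1Dy_le : W w * (1 + y) <= expR y.
  by apply: mulr_1Dx_le_expR; rewrite W_le1 ltW.
have expRy_le : expR y <= E w * expR (-1) * expR (- (A + 1)).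
  rewrite -!expRD ler_expR /y.
  have := young_abs_le lam k_gt0 (Y_sqr_le w); lra.
have := ler_wpM2r (ltW (expR_gt0 (- (A + 1))))
  (ler_wpM2l (expR_ge0 (V w / k ^+ 2)) expRN1_le_half).
rewrite /y in W_1Dy_le; rewrite /E in expRy_le *; lra.
Qed.

(* Integrating [tilted_pointwise_le] leaves [expR (-(A + 1)) <= expR (-A) / 2 <= E[W]]. *)
Lemma tilted_abs_moment_le (lam : R) : 0 < lam ->
  `|\int[P]_w (W w * Y w)| <= \int[P]_w W w * ((A + 2 + (lam * k) ^+ 2 / 4) / lam).
Proof.
move=> lam_gt0; set c := A + 1 + (lam * k) ^+ 2 / 4.
have := le_Rintegral measurableT (integrableD_fun (integrableZl_fun lam W_abs_Y_integrable)
    (integrableZl_fun (- c) tilted_integrable))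
  (integrableZl_fun (expR (- (A + 1)) / 2) E_integrable) (fun w _ => tilted_pointwise_le lam w).
rewrite RintegralD //; [|exact: integrableZl_fun W_abs_Y_integrable
                        |exact: integrableZl_fun tilted_integrable].
rewrite (RintegralZl _ measurableT W_abs_Y_integrable).
rewrite (RintegralZl _ measurableT tilted_integrable).
rewrite (RintegralZl _ measurableT E_integrable) /c => int_le.
have eA1_le : expR (- (A + 1)) <= expR (- A) / 2.
  by rewrite opprD expRD ler_pM2l ?expR_gt0 ?expRN1_le_half.
apply: le_trans (le_normr_Rintegral measurableT tilted_integrable_mul) _.
under eq_Rintegral => w _ do rewrite normrM (gtr0_norm (W_gt0 w)).
rewrite mulrA ler_pdivlMr //.
have := ler_wpM2l (ltW (divr_gt0 (expR_gt0 (- (A + 1))) (ltr0n _ 2))) E_integral_le2.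
have := tilted_mass_ge; lra.
Qed.

End tilted_moments.

Section euclidean_norm.
Context {R : realType} {n : nat}.
Implicit Types (x z v : 'rV[R]_n).

Lemma enorm_ge0 x : 0 <= enorm x.
Proof. exact: sqrtr_ge0. Qed.

Lemma enorm_sqr x : enorm x ^+ 2 = \sum_(j < n) x ord0 j ^+ 2.
Proof. by rewrite sqr_sqrtr // sumr_ge0 // => j _; rewrite sqr_ge0. Qed.

Lemma coord_sqr_le_enorm_sqr x (i : 'I_n) : x ord0 i ^+ 2 <= enorm x ^+ 2.
Proof.
rewrite enorm_sqr (bigD1 i) //= lerDl.
by apply: sumr_ge0 => j _; exact: sqr_ge0.
Qed.

Lemma abs_coord_le_enorm x (i : 'I_n) : `|x ord0 i| <= enorm x.
Proof.
rewrite -sqrtr_sqr /enorm ler_sqrt; last by apply: sumr_ge0 => j _; exact: sqr_ge0.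
by rewrite -enorm_sqr coord_sqr_le_enorm_sqr.
Qed.

Lemma enorm_sqr_basis_shift (h : R) (i : 'I_n) z :
  enorm (h *: basis_vec i + z) ^+ 2 = (h + z ord0 i) ^+ 2 + (enorm z ^+ 2 - z ord0 i ^+ 2).
Proof.
rewrite !enorm_sqr (bigD1 i) //= [in RHS](bigD1 i) //= !mxE eqxx mulr1 addrAC subrr add0r.
congr (_ + _); apply: eq_bigr => j ji.
by rewrite !mxE eq_sym (negbTE ji) mulr0 add0r.
Qed.

Lemma enorm_sqr_subZ_le x (c : R) v :
  enorm (x - c *: v) ^+ 2 <= 2 * enorm x ^+ 2 + 2 * c ^+ 2 * enorm v ^+ 2.
Proof.
rewrite !enorm_sqr 2!mulr_sumr -big_split /=; apply: ler_sum => j _.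
rewrite !mxE; have := sqr_ge0 (x ord0 j + c * v ord0 j); nra.
Qed.

Lemma measurable_enorm_sqr {dT : measure_display} {T : measurableType dT}
    (F : T -> 'rV[R]_n) :
  (forall j, measurable_fun setT (fun w => F w ord0 j)) ->
  measurable_fun setT (fun w => enorm (F w) ^+ 2).
Proof.
move=> mF; rewrite (_ : (fun w => _) = (fun w => \sum_(j < n) F w ord0 j ^+ 2)).
  by apply: measurable_sum => j; exact: measurable_funX.
by apply/funext => w; rewrite enorm_sqr.
Qed.

End euclidean_norm.

Section gaussian_profile.
Context {R : realType}.

Lemma is_derive_gauss_shift (C u Q s2 h : R) : s2 != 0 ->
  is_derive h 1 (fun h => C * expR (- ((h + u) ^+ 2 + Q) / (2 * s2)))
    (C * (expR (- ((h + u) ^+ 2 + Q) / (2 * s2)) * (- (h + u) / s2))).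
Proof.
move=> s2_neq0; apply: is_derive_eq.
rewrite !scaler0 !addr0 !add0r !scaler1 -mulr2n /GRing.scale /=.
by congr (_ * (_ * _)); field.
Qed.

(* With [y := t^2 / (2 s2)]: [|t| <= 1 + t^2 <= (1 + 2 s2) (1 + y)] and [expR (-y) (1 + y) <= 1]. *)
Lemma expR_sqr_mul_abs_le (s2 t : R) : 0 < s2 ->
  expR (- (t ^+ 2) / (2 * s2)) * `|t| <= 1 + 2 * s2.
Proof.
move=> s2_gt0; pose y := t ^+ 2 / (2 * s2).
have y_ge0 : 0 <= y by rewrite /y divr_ge0 ?sqr_ge0 // mulr_ge0 // ltW.
have Ey : expR (- y) * (1 + y) <= 1.
  rewrite -[leRHS](expRxMexpNx_1 y) mulrC ler_wpM2r ?expR_ge0 //.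
  exact: expR_ge1Dx.
have ty : `|t| <= (1 + 2 * s2) * (1 + y).
  have e1 : 2 * s2 * y = t ^+ 2 by rewrite /y mulrC divfK // mulf_neq0 // gt_eqF.
  rewrite -(real_normK (num_real t)) in e1.
  have := sqr_ge0 (`|t| - 1); have := normr_ge0 t; nra.
have := ler_wpM2l (expR_ge0 (- y)) ty; rewrite mulNr -/y.
have := ler_wpM2l (addr_ge0 ler01 (mulr_ge0 (ler0n _ 2) (ltW s2_gt0))) Ey.
nra.
Qed.

Lemma gauss_shift_derive_bound (C t Q s2 : R) : 0 <= C -> 0 < s2 -> 0 <= Q ->
  `|C * (expR (- (t ^+ 2 + Q) / (2 * s2)) * (- t / s2))| <= C * (1 + 2 * s2) / s2.
Proof.
move=> C_ge0 s2_gt0 Q_ge0.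
have EQ : expR (- (t ^+ 2 + Q) / (2 * s2)) <= expR (- (t ^+ 2) / (2 * s2)).
  by rewrite ler_expR !mulNr lerN2 ler_pM2r ?invr_gt0 ?mulr_gt0 // lerDl.
have Et : expR (- (t ^+ 2 + Q) / (2 * s2)) * `|t| <= 1 + 2 * s2.
  apply: le_trans (expR_sqr_mul_abs_le t s2_gt0).
  by rewrite ler_wpM2r.
rewrite !normrM normrN (ger0_norm C_ge0) (ger0_norm (expR_ge0 _)).
have s2V_gt0 : 0 < s2^-1 by rewrite invr_gt0.
rewrite (gtr0_norm s2V_gt0) !mulrA ler_wpM2r ?(ltW s2V_gt0) //.
by rewrite -mulrA ler_wpM2l.
Qed.

End gaussian_profile.

Lemma is_derive_dir {R : realType} {n : nat} (F : 'rV[R]_n -> R) (x v : 'rV[R]_n) (l : R) :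
  is_derive (0 : R) 1 (fun h => F (h *: v + x)) l -> is_derive x v F l.
Proof.
move=> dF.
have qE : (fun h : R => h^-1 *: ((F \o shift x) (h *: v) - F x)) =
    (fun h : R => h^-1 *: (((fun h => F (h *: v + x)) \o shift 0) (h *: 1) - F (0 *: v + x))).
  by apply/funext => h /=; rewrite scale0r add0r addr0 -[h%:A]/(h * 1) mulr1.
apply: DeriveDef; first by rewrite /derivable qE; exact: (@ex_derive _ _ _ _ _ _ _ dF).
by rewrite /derive qE; exact: (@derive_val _ _ _ _ _ _ _ dF).
Qed.

Section log_integral_derivative.
Context {R : realType} {dT : measure_display} {T : measurableType dT}.
Variable P : probability T R.

Lemma is_derive_ln_integral (f g : R -> T -> R) (c c' a : R) :
  (forall h, measurable_fun setT (f h)) -> (forall h w, `|f h w| <= c) ->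
  (forall (h : R) (w : T), is_derive h 1 (f ^~ w) (g h w)) -> (forall h w, `|g h w| <= c') ->
  0 < \int[P]_w f a w ->
  is_derive a 1 (fun h => ln (\int[P]_w f h w))
    ((\int[P]_w f a w)^-1 * \int[P]_w g a w).
Proof.
move=> mf f_le df g_le F_gt0.
have Ia : `]a - 1, a + 1[%classic a by rewrite /= in_itv /= ltrBlDr ltrDl ltr01.
have intf h : P.-integrable setT (EFin \o f h).
  exact: integrable_of_abs_le (mf h) (integrable_cst_prob P c) (f_le h).
have d1fE h w : partial1of2 f h w = g h w by rewrite partial1of2E (@derive_val _ _ _ _ _ _ _ (df h w)).
have G_ub h w : `|partial1of2 f h w| <= c' by rewrite d1fE.
have c'_ge0 : T -> 0 <= c' by move=> w; exact: le_trans (normr_ge0 _) (g_le a w).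
have dF : derivable (fun h => \int[P]_w f h w) a 1.
  exact: (derivable_under_integral measurableT Ia (fun h _ => intf h)
    (fun h w _ _ => @ex_derive _ _ _ _ _ _ _ (df h w)) c'_ge0 (integrable_cst_prob P c') (fun h w _ _ => G_ub h w)).
have DF : 'D_1 (fun h => \int[P]_w f h w) a = \int[P]_w g a w.
  rewrite -derive1E.
  rewrite (differentiation_under_integral measurableT Ia (fun h _ => intf h)
    (fun h w _ _ => @ex_derive _ _ _ _ _ _ _ (df h w)) c'_ge0 (integrable_cst_prob P c') (fun h w _ _ => G_ub h w)).
  by apply: eq_Rintegral => w _; rewrite d1fE.
exact: (is_derive1_comp (is_derive1_ln F_gt0) (DeriveDef dF DF)).
Qed.

End log_integral_derivative.

Section score_error_arithmetic.
Context {R : realType}.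

Lemma tilted_bound_le (nx k s2 : R) : 0 < k -> 0 <= nx -> 3/4 <= s2 ->
  (nx ^+ 2 / s2 + 2 + (1 + nx) ^+ 2 / 4) / ((1 + nx) / k) <= 43/12 * k * (1 + nx).
Proof.
move=> k_gt0 nx_ge0 s2_ge; have s2_gt0 : 0 < s2 by apply: lt_le_trans s2_ge.
have t_gt0 : 0 < 1 + nx by rewrite ltr_pwDl.
have A_le : nx ^+ 2 / s2 <= 4/3 * nx ^+ 2 by rewrite ler_pdivrMr //; nra.
have num_le : nx ^+ 2 / s2 + 2 + (1 + nx) ^+ 2 / 4 <= 43/12 * (1 + nx) ^+ 2 by nra.
rewrite invf_div mulrA ler_pdivrMr //.
have := ler_wpM2r (ltW k_gt0) num_le; lra.
Qed.

Lemma score_error_le (xi nx e k s2 eta m : R) : 0 < e -> 0 < k -> 0 <= nx ->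
  `|xi| <= nx -> 3/4 <= s2 -> `|m| <= 43/12 * k * (1 + nx) ->
  e <= eta -> e * k <= eta -> eta <= 1/16 ->
  `|(e ^+ 2 * xi - e * m) / s2| <= 8 * eta * (1 + nx).
Proof.
move=> e_gt0 k_gt0 nx_ge0 xi_le s2_ge m_le e_le ek_le eta_le.
have s2_gt0 : 0 < s2 by apply: lt_le_trans s2_ge.
have num_le : `|e ^+ 2 * xi - e * m| <= e ^+ 2 * nx + e * (43/12 * k * (1 + nx)).
  apply: le_trans (ler_normB _ _) (lerD _ _).
    by rewrite normrM ger0_norm ?sqr_ge0 // ler_wpM2l ?sqr_ge0.
  by rewrite normrM gtr0_norm // ler_wpM2l // ltW.
rewrite normrM normfV (gtr0_norm s2_gt0) ler_pdivrMr //; apply: le_trans num_le _.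
have e2_le : e ^+ 2 <= eta by nra.
have eta_t_ge0 : 0 <= eta * (1 + nx) by rewrite mulr_ge0 ?addr_ge0 // ltW // (lt_le_trans e_gt0).
have := ler_wpM2r nx_ge0 e2_le; have := ler_wpM2r (addr_ge0 ler01 nx_ge0) ek_le.
have := ler_wpM2l eta_t_ge0 s2_ge; lra.
Qed.

End score_error_arithmetic.

Section OU_score.
Context {R : realType} {dT : measure_display} {T : measurableType dT}.
Variables (P : probability T R) (d : nat) (X : 'I_d -> {RV P >-> R}) (t : R).
Hypothesis t_gt0 : 0 < t.

Let e := expR (- t).
Let s2 := 1 - expR (- (2 * t)).

Let s2E : s2 = 1 - e ^+ 2.
Proof. by rewrite /s2 /e expr2 -expRD; congr (1 - expR _); lra. Qed.

Let s2_gt0 : 0 < s2.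
Proof. by rewrite /s2 subr_gt0 expR_lt1 oppr_lt0 mulr_gt0. Qed.

Let mX j : measurable_fun setT (X j). Proof. exact: measurable_funPT. Qed.

(* [gauss_density s2 (x - e X)] without its normalising constant. *)
Definition OU_weight (x : 'rV[R]_d) (w : T) : R :=
  expR (- (enorm (x - e *: rvec X w) ^+ 2) / (2 * s2)).

Lemma OU_weight_gt0 x w : 0 < OU_weight x w.
Proof. exact: expR_gt0. Qed.

Lemma OU_weight_le1 x w : OU_weight x w <= 1.
Proof.
by rewrite expR_le1 mulNr oppr_le0 divr_ge0 ?sqr_ge0 // mulr_ge0 // ltW.
Qed.

Lemma measurable_OU_weight x : measurable_fun setT (OU_weight x).
Proof.
apply: measurableT_comp => //; apply: measurable_funM => //.
apply: measurableT_comp => //; apply: measurable_enorm_sqr => j.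
under eq_fun do rewrite !mxE.
by apply: measurable_funB => //; exact: measurable_funM.
Qed.

Let noise_coord x (i : 'I_d) w : (x - e *: rvec X w) ord0 i = x ord0 i - e * X i w.
Proof. by rewrite !mxE. Qed.

Lemma integrable_OU_weight x : P.-integrable setT (EFin \o OU_weight x).
Proof.
apply: (integrable_of_abs_le (measurable_OU_weight x) (integrable_cst_prob P 1)) => w.
by rewrite ger0_norm ?OU_weight_le1 // ltW // OU_weight_gt0.
Qed.

Lemma integrable_OU_weight_mul_noise x (i : 'I_d) :
  P.-integrable setT (EFin \o (fun w => OU_weight x w * (x ord0 i - e * X i w))).
Proof.
apply: (integrable_of_abs_le _ (integrable_cst_prob P (1 + 2 * s2))) => [|w].
  apply: measurable_funM; first exact: measurable_OU_weight.
  by apply: measurable_funB => //; exact: measurable_funM.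
rewrite normrM ger0_norm ?(ltW (OU_weight_gt0 _ _)) // -noise_coord.
apply: le_trans (expR_sqr_mul_abs_le _ s2_gt0); apply: ler_wpM2r => //.
rewrite ler_expR.
by rewrite !mulNr lerN2 ler_pM2r ?invr_gt0 ?mulr_gt0 // coord_sqr_le_enorm_sqr.
Qed.

(* Tweedie's formula, by differentiation under the integral along [basis_vec i]. *)
Lemma is_derive_ln_OU_density x (i : 'I_d) : 0 < \int[P]_w OU_weight x w ->
  is_derive x (basis_vec i) (fun y => ln (OU_density X t y))
    (- (\int[P]_w (OU_weight x w * (x ord0 i - e * X i w))) / (s2 * \int[P]_w OU_weight x w)).
Proof.
move=> Z_gt0; set C := (2 * pi * s2) `^ (- (d%:R / 2)).
have C_gt0 : 0 < C by rewrite powR_gt0 // !mulr_gt0 // pi_gt0.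
pose z w := x - e *: rvec X w.
pose Q w := enorm (z w) ^+ 2 - z w ord0 i ^+ 2.
pose f h w := C * OU_weight (h *: basis_vec i + x) w.
pose g h w := C * (expR (- ((h + z w ord0 i) ^+ 2 + Q w) / (2 * s2)) * (- (h + z w ord0 i) / s2)).
have fE w : f ^~ w = fun h => C * expR (- ((h + z w ord0 i) ^+ 2 + Q w) / (2 * s2)).
  by apply/funext => h; rewrite /f /OU_weight -addrA enorm_sqr_basis_shift.
have f_le h w : `|f h w| <= C.
  rewrite normrM (gtr0_norm C_gt0) (gtr0_norm (OU_weight_gt0 _ _)).
  by rewrite ler_piMr ?OU_weight_le1 // ltW.
have df (h : R) w : is_derive h 1 (f ^~ w) (g h w).
  by rewrite fE; apply: is_derive_gauss_shift; rewrite gt_eqF.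
have g_le h w : `|g h w| <= C * (1 + 2 * s2) / s2.
  apply: gauss_shift_derive_bound => //; first exact: ltW.
  by rewrite /Q subr_ge0 coord_sqr_le_enorm_sqr.
have f0 w : f 0 w = C * OU_weight x w by rewrite /f scale0r add0r.
have g0 w : g 0 w = - (C / s2) * (OU_weight x w * (x ord0 i - e * X i w)).
  rewrite /g /Q add0r [_ + (_ - _)]addrC subrK -noise_coord.
  by rewrite /OU_weight; ring.
have F0 : \int[P]_w f 0 w = C * \int[P]_w OU_weight x w.
  by under eq_Rintegral do rewrite f0; rewrite RintegralZl // integrable_OU_weight.
have G0 : \int[P]_w g 0 w = - (C / s2) * \int[P]_w (OU_weight x w * (x ord0 i - e * X i w)).
  by under eq_Rintegral do rewrite g0; rewrite RintegralZl // integrable_OU_weight_mul_noise.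
apply: is_derive_dir.
have := is_derive_ln_integral (P := P) (fun h => measurable_funM (measurable_cst C) (measurable_OU_weight _))
  f_le df g_le (a := 0).
rewrite F0 G0 => /(_ (mulr_gt0 C_gt0 Z_gt0)).
set Z := \int[P]_w OU_weight x w; set M := \int[P]_w _.
have -> : (C * Z)^-1 * (- (C / s2) * M) = - M / (s2 * Z).
  by field; rewrite !gt_eqF.
exact.
Qed.

Variables (k eta : R).
Hypothesis k_gt0 : 0 < k.
Hypothesis psi2_k : (\int[P]_w (expR (enorm (rvec X w) ^+ 2 / k ^+ 2))%:E <= 2%:E)%E.
Hypothesis e_le : e <= eta.
Hypothesis ek_le : e * k <= eta.
Hypothesis eta_le : eta <= 1/16.

Let e_gt0 : 0 < e. Proof. exact: expR_gt0. Qed.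

Let s2_ge : 3/4 <= s2.
Proof. by rewrite s2E; have := e_gt0; have := le_trans e_le eta_le; nra. Qed.

Let V w := enorm (rvec X w) ^+ 2.

Let mV : measurable_fun setT V.
Proof. by apply: measurable_enorm_sqr => j; under eq_fun do rewrite mxE; exact: mX. Qed.

Let V_ge0 w : 0 <= V w. Proof. exact: sqr_ge0. Qed.

Let Xi_sqr_le (i : 'I_d) w : X i w ^+ 2 <= V w.
Proof. by have := coord_sqr_le_enorm_sqr (rvec X w) i; rewrite mxE. Qed.

Let a_ge0 : 0 <= e ^+ 2 / s2. Proof. by rewrite divr_ge0 ?sqr_ge0 // ltW. Qed.

Let ak_le : e ^+ 2 / s2 * k ^+ 2 <= 1/2.
Proof.
have ek_small := le_trans ek_le eta_le.
have : (e * k) ^+ 2 <= 1/256 by have := mulr_ge0 (ltW e_gt0) (ltW k_gt0); nra.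
by rewrite mulrAC ler_pdivrMr // -exprMn; have := s2_ge; lra.
Qed.

Lemma OU_weight_ge x w :
  expR (- (enorm x ^+ 2 / s2)) * expR (- (e ^+ 2 / s2 * V w)) <= OU_weight x w.
Proof.
rewrite -expRD ler_expR.
have s2V_ge0 : 0 <= (2 * s2)^-1 by rewrite invr_ge0 mulr_ge0 // ltW.
have := ler_wpM2r s2V_ge0 (enorm_sqr_subZ_le x e (rvec X w)).
by rewrite /V !invfM; lra.
Qed.

Lemma OU_weight_integral_gt0 x : 0 < \int[P]_w OU_weight x w.
Proof.
exact: (tilted_mass_gt0 mV V_ge0 k_gt0 psi2_k (measurable_OU_weight x)
  (OU_weight_gt0 x) (OU_weight_le1 x) (OU_weight_ge x) a_ge0 ak_le).
Qed.

Lemma integrable_OU_weight_mul x (i : 'I_d) :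
  P.-integrable setT (EFin \o (fun w => OU_weight x w * X i w)).
Proof.
exact: (tilted_integrable_mul mV V_ge0 k_gt0 psi2_k (measurable_OU_weight x)
  (OU_weight_gt0 x) (OU_weight_le1 x) (mX i) (Xi_sqr_le i)).
Qed.

(* [tilted_abs_moment_le] with [lam = (1 + |x|) / k]. *)
Lemma OU_tilted_mean_le x (i : 'I_d) :
  `|\int[P]_w (OU_weight x w * X i w) / \int[P]_w OU_weight x w| <= 43/12 * k * (1 + enorm x).
Proof.
have lam_gt0 : 0 < (1 + enorm x) / k by rewrite divr_gt0 // ltr_pwDl // enorm_ge0.
have := tilted_abs_moment_le mV V_ge0 k_gt0 psi2_k (measurable_OU_weight x)
  (OU_weight_gt0 x) (OU_weight_le1 x) (OU_weight_ge x) a_ge0 ak_le (mX i) (Xi_sqr_le i) lam_gt0.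
rewrite divfK ?gt_eqF // => M_le.
have Z_gt0 := OU_weight_integral_gt0 x.
rewrite normrM normfV (gtr0_norm Z_gt0) ler_pdivrMr // mulrC.
apply: le_trans M_le _; apply: ler_wpM2l; first exact: ltW.
exact: tilted_bound_le (enorm_ge0 x) s2_ge.
Qed.

Lemma OU_score_error x (i : 'I_d) :
  derivable (fun y => ln (OU_density X t y)) x (basis_vec i) /\
  `| - x ord0 i - derive (fun y => ln (OU_density X t y)) x (basis_vec i) |
    <= 8 * eta * (1 + enorm x).
Proof.
have Z_gt0 := OU_weight_integral_gt0 x.
set Z := \int[P]_w OU_weight x w in Z_gt0.
have noiseE : \int[P]_w (OU_weight x w * (x ord0 i - e * X i w)) =
    x ord0 i * Z + (- e) * \int[P]_w (OU_weight x w * X i w).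
  rewrite (_ : (fun w => _) = (fun w => x ord0 i * OU_weight x w + (- e) * (OU_weight x w * X i w))).
    rewrite RintegralD //; [|exact: integrableZl_fun (integrable_OU_weight x)
                            |exact: integrableZl_fun (integrable_OU_weight_mul x i)].
    by rewrite !RintegralZl // ?integrable_OU_weight // integrable_OU_weight_mul.
  by apply/funext => w; ring.
have score := is_derive_ln_OU_density i Z_gt0.
split; first exact: (@ex_derive _ _ _ _ _ _ _ score).
rewrite (@derive_val _ _ _ _ _ _ _ score) -/Z noiseE.
set M := \int[P]_w _.
have -> : - x ord0 i - - (x ord0 i * Z + - e * M) / (s2 * Z) = (e ^+ 2 * x ord0 i - e * (M / Z)) / s2.
  by rewrite s2E; field; rewrite -s2E !gt_eqF.
exact: score_error_le e_gt0 k_gt0 (enorm_ge0 x) (abs_coord_le_enorm x i) s2_ge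
  (OU_tilted_mean_le x i) e_le ek_le eta_le.
Qed.

End OU_score.

Section psi2_norm.
Context {R : realType} {dT : measure_display} {T : measurableType dT}.
Variables (P : probability T R) (d : nat) (X : 'I_d -> {RV P >-> R}).
Hypothesis X_subgaussian : norm_subgaussian X.

Let psi2_set_has_inf : has_inf (psi2_set X).
Proof. by split => //; exists 0 => t [t_gt0 _]; exact: ltW. Qed.

Lemma psi2_norm_ge0 : 0 <= psi2_norm X.
Proof. by apply: lb_le_inf X_subgaussian _ => t [t_gt0 _]; exact: ltW. Qed.

Lemma psi2_set_near_inf : exists2 k, psi2_set X k & k < psi2_norm X + 1.
Proof. by have [k Xk k_lt] := inf_adherent ltr01 psi2_set_has_inf; exists k. Qed.

End psi2_norm.

Lemma expRN_mul_le1 {R : realType} (K t : R) : 0 < K -> ln K <= t -> expR (- t) * K <= 1.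
Proof.
move=> K_gt0; rewrite -ler_expR lnK ?posrE // => K_le.
by rewrite -(expRxMexpNx_1 t) mulrC ler_wpM2r ?expR_ge0.
Qed.

Theorem lemma12 (R : realType) (dT : measure_display) (T : measurableType dT)
  (P : probability T R) (d : nat) (X : 'I_d -> {RV P >-> R})
  (delta T1 : R) :
  norm_subgaussian X ->
  0 < delta -> delta < 1 ->
  ln (16 / delta * d%:R * (psi2_norm X + 1)) <= T1 ->
  forall (x : 'rV[R]_d) (i : 'I_d),
    derivable (fun y => ln (OU_density X T1 y)) x (basis_vec i) /\
    `| - x ord0 i - derive (fun y => ln (OU_density X T1 y)) x (basis_vec i) |
      <= delta / (2 * d%:R) * (1 + enorm x).
Proof.
move=> X_subgaussian delta_gt0 delta_lt1 T1_ge x i.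
have d_ge1 : 1 <= d%:R :> R by rewrite ler1n (leq_ltn_trans (leq0n i) (ltn_ord i)).
have d_gt0 : 0 < d%:R :> R := lt_le_trans ltr01 d_ge1.
have psi_ge0 := psi2_norm_ge0 X_subgaussian.
have [k [k_gt0 psi2_k] k_lt] := psi2_set_near_inf X_subgaussian.
set e := expR (- T1); set eta := delta / (16 * d%:R).
have e_gt0 : 0 < e := expR_gt0 _.
have e_psi_le : e * (psi2_norm X + 1) <= eta.
  have K_gt0 : 0 < 16 / delta * d%:R * (psi2_norm X + 1).
    by rewrite !mulr_gt0 ?invr_gt0 ?ltr_wpDl // d_gt0.
  have := expRN_mul_le1 K_gt0 T1_ge; rewrite -/e.
  have -> : e * (16 / delta * d%:R * (psi2_norm X + 1)) = e * (psi2_norm X + 1) / eta.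
    by rewrite /eta; field; rewrite !gt_eqF // d_gt0.
  by rewrite ler_pdivrMr ?mul1r // divr_gt0 // mulr_gt0 // d_gt0.
have e_le : e <= eta.
  by apply: le_trans e_psi_le; apply: ler_peMr; [exact: ltW | lra].
have ek_le : e * k <= eta.
  by apply: le_trans e_psi_le; apply: ler_wpM2l; [exact: ltW | exact: ltW].
have eta_le : eta <= 1/16.
  by rewrite /eta ler_pdivrMr ?mulr_gt0 //; lra.
have T1_gt0 : 0 < T1.
  by rewrite -oppr_lt0 -expR_lt1 -/e (le_lt_trans e_le) // (le_lt_trans eta_le) //; lra.
have -> : delta / (2 * d%:R) = 8 * eta.
  by rewrite /eta; field; rewrite gt_eqF // d_gt0.
exact: (OU_score_error T1_gt0 k_gt0 psi2_k e_le ek_le eta_le x i).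
Qed.
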